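(* Let $X$ be a shift space which is eventually dendric with threshold $m$. Then $\rho_X(U)$ is finite for every suffix code $U\subseteq\mathcal L(X)$. Moreover, if $U$ is a finite $X$-maximal suffix code with $U\subseteq\mathcal L_{\ge m}(X)$, then $\rho_X(U)=\rho_X(\mathcal L_m(X))$.
   Context: $A$ is a finite alphabet; a shift space is a closed shift-invariant subset $X\subseteq A^{\mathbb Z}$; $\mathcal L(X)$ is its set of finite factors (including the empty word), $\mathcal L_n(X)=\mathcal L(X)\cap A^n$, $\mathcal L_{\ge n}(X)=\bigcup_{k\ge n}\mathcal L_k(X)$. For $w\in\mathcal L(X)$, the extension graph $\mathcal E_1(w)$ is the undirected bipartite graph with vertex set the disjoint union of $\{a\in A: aw\in\mathcal L(X)\}$ and $R_1(w)=\{b\in A: wb\in\mathcal L(X)\}$, with an edge $(a,b)$ iff $awb\in\mathcal L(X)$; $X$ is eventually dendric with threshold $m$ if $\mathcal E_1(w)$ is a tree for every $w\in\mathcal L_{\ge m}(X)$. Set $\rho_X(w)=\mathrm{Card}\,R_1(w)-1$ and $\rho_X(W)=\sum_{w\in W}\rho_X(w)$ for $W\subseteq\mathcal L(X)$. A suffix code is a set of words none of which is a proper suffix of another; a suffix code $U\subseteq\mathcal L(X)$ is $X$-maximal if it is not properly contained in a suffix code $V\subseteq\mathcal L(X)$. *)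

From Stdlib Require Import ClassicalDescription.
From HB Require Import structures.
From mathcomp Require Import all_boot all_order all_algebra.
Set Implicit Arguments. Unset Strict Implicit. Unset Printing Implicit Defensive.
Import Order.TTheory GRing.Theory Num.Theory.

Section Shifts.
Variable A : finType.

Definition config := int -> A.

Definition shift (x : config) : config := fun i => x (i + 1)%R.

(* X closed in the product (Cantor) topology of A^Z, A discrete *)
Definition closed_set (X : config -> Prop) : Prop :=
  forall x : config,
    (forall n : nat, exists y, X y /\
       forall i : int, (- (n%:Z) <= i)%R -> (i <= n%:Z)%R -> y i = x i) ->
    X x.

Definition shift_invariant (X : config -> Prop) : Prop :=
  forall x, X x <-> X (shift x).

Definition shift_space (X : config -> Prop) : Prop :=
  closed_set X /\ shift_invariant X.

Definition factor_at (x : config) (i : int) (n : nat) : seq A :=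
  [seq x (i + k%:Z)%R | k <- iota 0 n].

(* language L(X), including the empty word *)
Definition inL (X : config -> Prop) (w : seq A) : Prop :=
  exists x, X x /\ exists i : int, w = factor_at x i (size w).

Definition inLb (X : config -> Prop) (w : seq A) : bool :=
  if excluded_middle_informative (inL X w) then true else false.

Definition R1 (X : config -> Prop) (w : seq A) : {set A} :=
  [set b | inLb X (rcons w b)].

Definition rho (X : config -> Prop) (w : seq A) : nat := #|R1 X w| - 1.

(* Extension graph E_1(w): vertices inl a (left, a w in L) and inr b
   (right, w b in L); undirected edge {inl a, inr b} iff a w b in L. *)
Definition ext_vertices (X : config -> Prop) (w : seq A) : pred (A + A) :=
  fun v => match v with
           | inl a => inLb X (a :: w)
           | inr b => inLb X (rcons w b)
           end.

Definition ext_edge (X : config -> Prop) (w : seq A) : rel (A + A) :=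
  fun u v => match u, v with
             | inl a, inr b => inLb X (a :: rcons w b)
             | inr b, inl a => inLb X (a :: rcons w b)
             | _, _ => false
             end.

(* A (simple, undirected) graph with vertex set V and symmetric edge relation
   e is a tree: connected and acyclic (no cycle through >= 3 distinct vertices). *)
Definition is_tree (T : finType) (V : pred T) (e : rel T) : Prop :=
  (forall u v, u \in V -> v \in V -> connect e u v) /\
  (forall c : seq T, all (mem V) c -> uniq c -> 3 <= size c -> ~~ cycle e c).

Definition eventually_dendric (X : config -> Prop) (m : nat) : Prop :=
  forall w : seq A, m <= size w -> inL X w ->
    is_tree (ext_vertices X w) (ext_edge X w).

Definition suffix_code (U : seq A -> Prop) : Prop :=
  forall u v, U u -> U v -> suffix u v -> u = v.

Definition X_maximal_suffix_code (X : config -> Prop) (U : seq A -> Prop) : Prop :=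
  suffix_code U /\ (forall u, U u -> inL X u) /\
  (forall V : seq A -> Prop, suffix_code V -> (forall v, V v -> inL X v) ->
     (forall u, U u -> V u) -> forall v, V v -> U v).

(* rho_X(U) is finite (for U of arbitrary cardinality): the finite partial
   sums of the nonnegative terms rho_X(u), u in U, are bounded. *)
Definition rho_finite (X : config -> Prop) (U : seq A -> Prop) : Prop :=
  exists N : nat, forall s : seq (seq A), uniq s -> (forall u, u \in s -> U u) ->
    \sum_(u <- s) rho X u <= N.

End Shifts.

From Stdlib Require Import Classical ClassicalDescription.
From mathcomp Require Import all_boot all_order all_algebra zify ring.
Set Implicit Arguments. Unset Strict Implicit. Unset Printing Implicit Defensive.

(* For a word w of length at least m, counting the edges of the tree E_1(w)
   in two ways gives sum_a Card R_1(aw) = (number of left extensions of w)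
   + Card R_1(w) - 1, that is rho(w) = sum_a rho(aw).  Iterating this along
   left extensions pushes the weight rho(w) onto the longer words having w as
   a suffix: a suffix code receives at most rho(w), and an X-maximal one
   receives exactly rho(w).  Grouping a code by the length-m suffixes of its
   words gives both claims, the words shorter than m contributing a bounded
   amount. *)

Section TreeArcs.
Variable T : finType.
Implicit Types (V : pred T) (e : rel T).

Definition arcs e := [set p : T * T | e p.1 p.2].

Definition acyclic V e :=
  forall c : seq T, all (mem V) c -> uniq c -> 3 <= size c -> ~~ cycle e c.

Definition edges_in V e := forall u v, e u v -> v \in V.

Lemma path_edges_in V e x t :
  edges_in V e -> x \in V -> path e x t -> all (mem V) (x :: t).
Proof.
move=> eV; elim: t x => [|y t IH] x xV /=; first by rewrite xV.
by case/andP=> exy pt; rewrite xV; apply: IH (eV _ _ exy) pt.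
Qed.

Lemma path_back_edge_cycle V e x t z :
  edges_in V e -> x \in V -> path e x t -> uniq (x :: t) ->
  e (last x t) z -> (index z (x :: t)).+1 < size t -> ~ acyclic V e.
Proof.
move=> eV xV pt ut ez ltz acyc.
have zc : z \in x :: t by rewrite -index_mem -[size _]/((size t).+1); lia.
set c := x :: t in ut ltz zc *.
have cV := path_edges_in eV xV pt.
set i := index z c.
have dE : drop i c = z :: drop i.+1 c by rewrite (drop_nth z) ?nth_index ?index_mem.
have allc : all (mem V) (drop i c) by apply/allP => v /mem_drop; apply/allP.
have sz : 3 <= size (drop i c) by rewrite size_drop /=; lia.
have := acyc _ allc (drop_uniq i ut) sz.
apply/negP/negPn; rewrite dE /= rcons_path.
have /(drop_sorted i) : sorted e c by [].
rewrite dE /= => -> /=.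
have : last x c = last x t by [].
by rewrite -(cat_take_drop i c) last_cat dE /= => ->.
Qed.

(* An end of a longest simple path is a leaf: its neighbours all lie on the
   path, and a second one would close a cycle. *)
Lemma acyclic_leaf V e x0 :
  irreflexive e -> edges_in V e -> acyclic V e -> x0 \in V ->
  exists2 y, y \in V & forall z1 z2, e y z1 -> e y z2 -> z1 = z2.
Proof.
move=> eirr eV acyc x0V.
pose P n := [exists x, exists t : n.-tuple T, [&& x \in V, path e x t & uniq (x :: t)]].
have P0 : exists n, P n.
  by exists 0; apply/existsP; exists x0; apply/existsP; exists [tuple]; rewrite x0V.
have Pbound n : P n -> n <= #|T|.
  case/existsP=> x /existsP [t /and3P [_ _ /card_uniqP E]].
  by have := max_card (mem (x :: (t : seq T))); rewrite E /= size_tuple => /ltnW.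
case: (ex_maxnP P0 Pbound) => n /existsP [x /existsP [t /and3P [xV pt ut]]] maxn.
pose y := last x t.
have yV : y \in V by apply: (allP (path_edges_in eV xV pt)); apply: mem_last.
exists y => // z1 z2 e1 e2.
have onpath z : e y z -> z \in x :: (t : seq T).
  move=> eyz; apply/negPn/negP => zc; have /maxn : P n.+1.
    apply/existsP; exists x; apply/existsP.
    have st : size (rcons t z) == n.+1 by rewrite size_rcons size_tuple.
    have u' : uniq (x :: rcons t z) by rewrite -rcons_cons rcons_uniq zc ut.
    by exists (Tuple st); rewrite /= xV rcons_path pt eyz; exact: u'.
  by rewrite ltnn.
have last_index z : e y z -> index z (x :: (t : seq T)) < size t.
  move=> eyz; have zc := onpath z eyz.
  have : index z (x :: (t : seq T)) < (size t).+1 by rewrite index_mem.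
  rewrite ltnS leq_eqVlt => /orP [/eqP E|//].
  by move: eyz; rewrite /y (last_nth x) -E nth_index // eirr.
case: (eqVneq z1 z2) => // ne.
have : index z1 (x :: (t : seq T)) != index z2 (x :: (t : seq T)).
  by apply: contra ne => /eqP E; rewrite -(nth_index x (onpath _ e1)) E nth_index ?onpath.
rewrite neq_ltn => /orP [] lt; exfalso.
  apply: (path_back_edge_cycle eV xV pt ut e1 _ acyc).
  by move: (last_index _ e2); lia.
apply: (path_back_edge_cycle eV xV pt ut e2 _ acyc).
by move: (last_index _ e1); lia.
Qed.

Lemma acyclic_card_arcs_le V e :
  symmetric e -> irreflexive e -> edges_in V e -> acyclic V e ->
  #|arcs e| <= 2 * (#|V| - 1).
Proof.
move: {2}#|V| (erefl #|V|) => n; elim: n V e => [|n IH] V e cardV esym eirr eV acyc.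
  suff -> : arcs e = set0 by rewrite cards0.
  by apply/setP => -[u v]; rewrite !inE; apply/negbTE/negP => /eV; rewrite (card0_eq cardV).
have [x0 x0V] : exists x0, x0 \in V by apply/card_gt0P; rewrite cardV.
have [y yV leaf] := acyclic_leaf eirr eV acyc x0V.
pose V' := [predD1 V & y].
pose e' := [rel u v | [&& e u v, u != y & v != y]].
have cardV' : #|V'| = n by apply/succn_inj; rewrite -cardV (cardD1 y V) yV.
have IH' : #|arcs e'| <= 2 * (#|V'| - 1).
  apply: IH => //.
  - by move=> u v /=; rewrite esym; case: (u != y); case: (v != y); rewrite ?andbF.
  - by move=> u /=; rewrite eirr.
  - by move=> u v /and3P [euv _ vy]; rewrite !inE vy (eV _ _ euv).
  - move=> c cV' uc sc; apply: contraNN (acyc c _ uc sc).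
      by apply: sub_cycle => u v /and3P [].
    by apply/allP => v /(allP cV'); rewrite !inE => /andP [].
case: (pickP (e y)) => [z eyz | isolated]; last first.
  suff -> : arcs e = arcs e' by rewrite cardV -cardV'; lia.
  apply/setP => -[u v]; rewrite !inE /=.
  case euv: (e u v) => //=; symmetry; apply/andP; split; apply: contraTneq euv => ->.
    by rewrite isolated.
  by rewrite esym isolated.
have zV' : z \in V'.
  by rewrite !inE (eV _ _ eyz) andbT; apply: contraTneq eyz => ->; rewrite eirr.
have sub : arcs e \subset arcs e' :|: [set (y, z); (z, y)].
  apply/subsetP => -[u v]; rewrite !inE /= => euv.
  case: (eqVneq u y) => [uy | uy].
    by rewrite uy in euv *; rewrite (leaf _ _ euv eyz) eqxx !orbT.
  case: (eqVneq v y) => [vy | vy].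
    by rewrite vy esym in euv *; rewrite (leaf _ _ euv eyz) eqxx !orbT.
  by rewrite euv.
have two : #|[set (y, z); (z, y)]| <= 2 by rewrite cards2; case: (_ != _).
have V'0 : 0 < #|V'| by apply/card_gt0P; exists z.
have := leq_trans (subset_leq_card sub) (leq_card_setU _ _); rewrite cardV -cardV'; lia.
Qed.

Section ConnectedArcs.
Variables (V : pred T) (e : rel T) (v0 : T).
Hypotheses (esym : symmetric e) (v0V : v0 \in V).
Hypothesis connV : forall u v, u \in V -> v \in V -> connect e u v.

(* [v] is reached from [v0] by a walk of length [n]; vacuously true off the
   component of [v0], so that [dist] is always defined. *)
Definition within v n :=
  [exists p : n.-tuple T, path e v0 p && (last v0 p == v)] || ~~ connect e v0 v.

Lemma exists_within v : exists n, within v n.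
Proof.
case ce: (connect e v0 v); last by exists 0; rewrite /within ce orbT.
case/connectP: ce => p pp vE; exists (size p); apply/orP; left.
by apply/existsP; exists (in_tuple p); rewrite /= pp vE eqxx.
Qed.

Definition dist v := ex_minn (exists_within v).

Lemma parent_exists v : v \in V -> v != v0 -> exists u, e u v && (dist u < dist v).
Proof.
move=> vV vv0; rewrite /dist; case: ex_minnP => n.
rewrite /within connV //= orbF => /existsP [p /andP [pp /eqP lp]] nmin.
move: (size_tuple p) pp lp; move: (p : seq T) => {}p <-.
case/lastP: p => [_ /= vE|q z]; first by rewrite vE eqxx in vv0.
rewrite rcons_path last_rcons size_rcons => /andP [pq ez] zv; subst z.
exists (last v0 q); rewrite ez /=; case: ex_minnP => k _ kmin; rewrite ltnS kmin //.
by apply/orP; left; apply/existsP; exists (in_tuple q); rewrite /= pq eqxx.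
Qed.

Definition parent v := odflt v0 [pick u | e u v && (dist u < dist v)].

Lemma parentP v : v \in V -> v != v0 -> e (parent v) v && (dist (parent v) < dist v).
Proof.
move=> vV vv0; rewrite /parent; case: pickP => [u //|none].
by have [u] := parent_exists vV vv0; rewrite none.
Qed.

(* The arcs between each vertex other than [v0] and its parent are pairwise
   distinct, since [dist] decreases along them. *)
Lemma connected_card_arcs_ge : 2 * (#|V| - 1) <= #|arcs e|.
Proof.
pose W := [set v | (v \in V) && (v != v0)].
pose down := [set (parent v, v) | v in W].
pose up := [set (v, parent v) | v in W].
have cardW : #|W| = #|V| - 1.
  by rewrite (cardD1 v0 V) v0V add1n subn1; apply: eq_card => v; rewrite !inE andbC.
have card_down : #|down| = #|W| by apply: card_in_imset => u v _ _ [].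
have card_up : #|up| = #|W| by apply: card_in_imset => u v _ _ [].
have disj : [disjoint down & up].
  apply/pred0P => -[u v] /=; apply/negbTE/andP => -[/imsetP [x xW [-> ->]]].
  case/imsetP=> y yW [xE yE].
  move: xW yW; rewrite !inE => /andP [/parentP Px /Px /andP [_ ltx]].
  case/andP=> /parentP Py /Py /andP [_ lty].
  by move: ltx lty; rewrite xE -yE => a /(ltn_trans a); rewrite ltnn.
have sub : down :|: up \subset arcs e.
  apply/subsetP => p; rewrite inE => /orP [] /imsetP [v]; rewrite inE.
    by case/andP=> /parentP Pv /Pv /andP [epv _] ->; rewrite inE.
  by case/andP=> /parentP Pv /Pv /andP [epv _] ->; rewrite inE /= esym.
have := subset_leq_card sub; rewrite cardsU (disjoint_setI0 disj) cards0 subn0.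
by rewrite card_down card_up cardW addnn mul2n.
Qed.

End ConnectedArcs.

Lemma tree_card_arcs V e v0 :
  symmetric e -> irreflexive e -> edges_in V e -> v0 \in V -> is_tree V e ->
  #|arcs e| = 2 * (#|V| - 1).
Proof.
move=> esym eirr eV v0V [connV acyc]; apply/eqP; rewrite eqn_leq.
by rewrite acyclic_card_arcs_le // (connected_card_arcs_ge esym v0V connV).
Qed.

End TreeArcs.

Section Language.
Variables (A : finType) (X : config A -> Prop).

Lemma inLbP w : reflect (inL X w) (inLb X w).
Proof. by rewrite /inLb; case: excluded_middle_informative => H; constructor. Qed.

Lemma factor_atD (x : config A) i n1 n2 :
  factor_at x i (n1 + n2) = factor_at x i n1 ++ factor_at x (i + n1%:Z)%R n2.
Proof.
rewrite /factor_at iotaD map_cat add0n; congr (_ ++ _).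
rewrite -[n1 in iota n1 _]addn0 iotaDl -map_comp.
by apply: eq_map => k /=; rewrite PoszD GRing.addrA.
Qed.

Lemma size_factor_at (x : config A) i n : size (factor_at x i n) = n.
Proof. by rewrite size_map size_iota. Qed.

Lemma inL_infix u v t : inL X (u ++ v ++ t) -> inL X v.
Proof.
case=> x [Xx [i E]]; exists x; split => //; exists (i + (size u)%:Z)%R.
move/eqP: E; rewrite !size_cat !factor_atD eqseq_cat ?size_factor_at // => /andP [_].
by rewrite eqseq_cat ?size_factor_at // => /andP [/eqP <- _].
Qed.

Lemma inL_suffix u v : suffix u v -> inL X v -> inL X u.
Proof. by case/suffixP => t -> H; apply: (@inL_infix t u [::]); rewrite cats0. Qed.

Lemma inL_rcons w b : inL X (rcons w b) -> inL X w.
Proof. by rewrite -cats1 => /(@inL_infix [::]). Qed.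

Lemma inL_extend_right w : inL X w -> exists b, inL X (rcons w b).
Proof.
case=> x [Xx [i E]]; exists (x (i + (size w)%:Z)%R), x; split => //; exists i.
by rewrite size_rcons -addn1 factor_atD -E -cats1 /factor_at /= GRing.addr0.
Qed.

Lemma inL_extend_left w : inL X w -> exists a, inL X (a :: w).
Proof.
case=> x [Xx [i E]]; exists (x (i - 1)%R), x; split => //; exists (i - 1)%R.
rewrite /= {1}E /factor_at /= GRing.addr0; congr (_ :: _).
rewrite -[iota 1 _]/(iota (1 + 0) _) iotaDl -map_comp; apply: eq_map => k /=.
by congr (x _); rewrite -addn1 PoszD; ring.
Qed.

Lemma card_R1 w : #|R1 X w| = rho X w + inLb X w.
Proof.
case: (inLbP w) => [wL | wNL]; last first.
  rewrite addn0 /rho; suff -> : R1 X w = set0 by rewrite cards0.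
  by apply/setP => b; rewrite !inE; apply/negbTE/inLbP => /inL_rcons.
have [b bL] := inL_extend_right wL.
have : 0 < #|R1 X w| by apply/card_gt0P; exists b; rewrite inE; apply/inLbP.
by rewrite /rho; lia.
Qed.

Lemma rho_notL w : ~ inL X w -> rho X w = 0.
Proof. by move=> /inLbP /negbTE wNL; have := card_R1 w; rewrite /rho wNL; lia. Qed.

Lemma rho_le_card w : rho X w <= #|A|.
Proof. by rewrite /rho leq_subLR (leq_trans (max_card _)) ?leq_addl. Qed.

Lemma ext_edge_sym w : symmetric (ext_edge X w).
Proof. by case=> a; case. Qed.

Lemma ext_edge_irr w : irreflexive (ext_edge X w).
Proof. by case. Qed.

Lemma ext_edges_in w : edges_in (ext_vertices X w) (ext_edge X w).
Proof.
case=> a; case=> b //= /inLbP awb; rewrite unfold_in /=; apply/inLbP.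
  by apply: (@inL_infix [:: a] _ [::]); rewrite cats0.
by apply: (@inL_infix [::] _ [:: a]); rewrite -cats1 in awb.
Qed.

Lemma card_ext_vertices w :
  #|ext_vertices X w| = #|[set a | inLb X (a :: w)]| + #|R1 X w|.
Proof.
by rewrite -!sum1_card big_sumType; congr (_ + _); apply: eq_bigl => a; rewrite inE.
Qed.

Lemma card_ext_arcs w :
  #|arcs (ext_edge X w)| = 2 * \sum_(a : A) #|R1 X (a :: w)|.
Proof.
rewrite -sum1dep_card big_mkcond /=.
rewrite -(pair_big xpredT xpredT (fun u v => if ext_edge X w u v then 1 else 0)) /=.
rewrite big_sumType /=.
under eq_bigr do rewrite big_sumType /= big1 ?add0n //.
under [X in _ + X]eq_bigr do rewrite big_sumType /= [X in _ + X]big1 ?addn0 //.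
rewrite [X in _ + X]exchange_big addnn -mul2n; congr (2 * _).
apply: eq_bigr => a _; rewrite -sum1_card [RHS]big_mkcond.
by apply: eq_bigr => b _; rewrite inE.
Qed.

Lemma rho_sum_cons w :
  is_tree (ext_vertices X w) (ext_edge X w) -> inL X w ->
  rho X w = \sum_(a : A) rho X (a :: w).
Proof.
move=> tree wL; have [a awL] := inL_extend_left wL.
have aV : inl a \in ext_vertices X w by rewrite unfold_in; apply/inLbP.
have := tree_card_arcs (@ext_edge_sym w) (@ext_edge_irr w) (@ext_edges_in w) aV tree.
rewrite card_ext_arcs card_ext_vertices.
have -> : \sum_(b : A) #|R1 X (b :: w)| =
          \sum_(b : A) rho X (b :: w) + #|[set b | inLb X (b :: w)]|.
  under eq_bigr do rewrite card_R1.
  rewrite big_split /=; congr (_ + _); rewrite -sum1dep_card [RHS]big_mkcond.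
  by apply: eq_bigr => b _; case: inLb.
have := card_R1 w; have : 0 < #|[set b | inLb X (b :: w)]|.
  by apply/card_gt0P; exists a; rewrite inE; apply/inLbP.
by move/inLbP: wL => ->; lia.
Qed.

End Language.

Section SuffixCombinatorics.
Variable T : finType.
Implicit Types (u v w : seq T).

Lemma suffix_size_inj u v w : suffix u w -> suffix v w -> size u = size v -> u = v.
Proof. by rewrite !suffixE => /eqP ue /eqP ve sz; rewrite -ue sz. Qed.

Lemma suffix_comparable u v w : suffix u w -> suffix v w -> size u <= size v -> suffix u v.
Proof.
move=> uw vw le; have vsz := size_suffix vw.
move: uw vw; rewrite !suffixE => uw /eqP {2}<-; rewrite drop_drop.
by rewrite addnC addnBA // subnK.
Qed.

Lemma suffix_cons_inv u a w : suffix u (a :: w) -> u = a :: w \/ suffix u w.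
Proof.
case/suffixP=> [[|b x]] /= E; first by left.
by right; case: E => _ ->; apply: suffix_suffix.
Qed.

Lemma exists_cons_suffix w u : [exists a, suffix (a :: w) u] = suffix w u && (u != w).
Proof.
apply/existsP/andP => [[a awu] | [/suffixP [x ->] uw]].
  split; first exact: (catl_suffix (s := [:: a]) awu).
  by apply: contraTneq (size_suffix awu) => ->; rewrite ltnn.
case/lastP: x uw => [|x a _]; first by rewrite eqxx.
by exists a; rewrite -cats1 -catA suffix_suffix.
Qed.

Lemma exists_tuple_suffix m u : [exists t : m.-tuple T, suffix t u] = (m <= size u).
Proof.
apply/existsP/idP => [[t /size_suffix] | mu]; first by rewrite size_tuple.
have sz : size (drop (size u - m) u) == m by rewrite size_drop; apply/eqP; lia.
by exists (Tuple sz); apply: suffix_drop.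
Qed.

Lemma exchange_big_unique (I : finType) (s : seq (seq T)) (P : I -> pred (seq T))
    (F : seq T -> nat) :
  (forall i j u, P i u -> P j u -> i = j) ->
  \sum_(i : I) \sum_(u <- s | P i u) F u = \sum_(u <- s | [exists i, P i u]) F u.
Proof.
move=> Puniq; under eq_bigr do rewrite big_mkcond.
rewrite exchange_big [RHS]big_mkcond; apply: eq_bigr => u _.
case: (pickP (P^~ u)) => [i Pi | noP]; last first.
  by rewrite big1 => [|i _]; [case: existsP => // -[i]; rewrite noP | rewrite noP].
rewrite (bigD1 i) //= Pi big1 ?addn0 => [|j ij]; last first.
  by case: ifP => // Pj; rewrite (Puniq _ _ _ Pj Pi) eqxx in ij.
by case: existsP => // -[]; exists i.
Qed.

Lemma sum_suffix_none s w (F : seq T -> nat) :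
  (forall u, u \in s -> ~~ suffix w u) -> \sum_(u <- s | suffix w u) F u = 0.
Proof.
by move=> none; rewrite big_seq_cond big_pred0 // => u; apply/negbTE/andP => -[/none/negP].
Qed.

Lemma sum_suffix_mem s w (F : seq T -> nat) :
  uniq s -> suffix_code (fun u => u \in s) -> w \in s ->
  \sum_(u <- s | suffix w u) F u = F w.
Proof.
move=> s_uniq s_code ws; rewrite -big_filter.
rewrite (eq_in_filter (a2 := pred1 w)) ?filter_pred1_uniq ?big_seq1 // => u us /=.
by apply/idP/eqP => [/(s_code _ _ ws us) -> | ->] //; apply: suffix_refl.
Qed.

Lemma sum_suffix_cons s w (F : seq T -> nat) :
  w \notin s ->
  \sum_(u <- s | suffix w u) F u = \sum_(a : T) \sum_(u <- s | suffix (a :: w) u) F u.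
Proof.
move=> ws; rewrite exchange_big_unique => [|a b u au bu]; last first.
  by have [] := suffix_size_inj au bu erefl.
rewrite big_seq_cond [RHS]big_seq_cond; apply: eq_bigl => u.
rewrite exists_cons_suffix; case: (boolP (u \in s)) => //= us.
by case: (eqVneq u w) => [uw | _]; [rewrite uw (negbTE ws) in us | rewrite andbT].
Qed.

Lemma sum_long_words m s (F : seq T -> nat) :
  \sum_(u <- s | m <= size u) F u = \sum_(t : m.-tuple T) \sum_(u <- s | suffix t u) F u.
Proof.
rewrite exchange_big_unique => [|t t' u tu t'u]; last first.
  by apply: val_inj; apply: suffix_size_inj tu t'u _; rewrite !size_tuple.
by apply: eq_bigl => u; rewrite exists_tuple_suffix.
Qed.

(* Left-padding to length [m] is injective on a suffix code, because two
   suffixes of one word are comparable. *)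
Lemma size_short_suffix_code (a0 : T) m s :
  uniq s -> suffix_code (fun u => u \in s) -> (forall u, u \in s -> size u <= m) ->
  size s <= #|T| ^ m.
Proof.
move=> s_uniq s_code short.
pose pad u := nseq (m - size u) a0 ++ u.
have pad_suffix u : suffix u (pad u) by apply: suffix_suffix.
pose tpad u : m.-tuple T := insubd [tuple of nseq m a0] (pad u).
have tpadE u : u \in s -> val (tpad u) = pad u.
  by move=> us; rewrite val_insubd size_cat size_nseq subnK ?short ?eqxx.
have inj : {in s &, injective tpad}.
  move=> u v us vs /(congr1 val); rewrite !tpadE // => E.
  have [uv | vu] := leqP (size u) (size v).
    by apply: s_code => //; apply: suffix_comparable (pad_suffix u) _ uv; rewrite E.
  apply/esym/s_code => //; apply: suffix_comparable (pad_suffix v) _ (ltnW vu).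
  by rewrite -E.
rewrite -card_tuple -(size_map tpad) -(card_uniqP _) ?map_inj_in_uniq //.
exact: max_card.
Qed.

End SuffixCombinatorics.

Section SuffixCodes.
Variables (A : finType) (X : config A -> Prop).

Lemma sum_suffix_notL (s : seq (seq A)) w (F : seq A -> nat) :
  (forall u, u \in s -> inL X u) -> ~ inL X w -> \sum_(u <- s | suffix w u) F u = 0.
Proof.
by move=> sL wNL; apply: sum_suffix_none => u /sL uL; apply/negP => /inL_suffix /(_ uL).
Qed.

Lemma sum_rho_short_le m (s : seq (seq A)) :
  uniq s -> suffix_code (fun u => u \in s) ->
  \sum_(u <- s | ~~ (m <= size u)) rho X u <= #|A| * #|A| ^ m.
Proof.
move=> s_uniq s_code; case: (pickP (xpredT : pred A)) => [a0 _ | A0]; last first.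
  have cardA : #|A| = 0 by apply: eq_card0.
  by rewrite big1 // => u _; apply/eqP; rewrite -leqn0 -cardA rho_le_card.
apply: (@leq_trans (\sum_(u <- s | ~~ (m <= size u)) #|A|)).
  by apply: leq_sum => u _; apply: rho_le_card.
rewrite big_const_seq iter_addn_0 -size_filter leq_mul2l.
apply/orP; right; apply: (size_short_suffix_code a0).
- exact: filter_uniq.
- by move=> u v; rewrite !mem_filter => /andP [_ us] /andP [_ vs]; apply: s_code.
- by move=> u; rewrite mem_filter -ltnNge => /andP [/ltnW].
Qed.

Lemma maximal_suffix_code_comparable (U : seq A -> Prop) w :
  X_maximal_suffix_code X U -> inL X w -> exists2 u, U u & suffix u w || suffix w u.
Proof.
move=> [U_code [UL Umax]] wL; apply: NNPP => incomparable.
have Uw : U w.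
  apply: (Umax (fun v => U v \/ v = w)) => [u v [Uu | ->] [Uv | ->] uv||u|] //.
  - exact: U_code.
  - by case: incomparable; exists u => //; rewrite uv.
  - by case: incomparable; exists v => //; rewrite uv orbT.
  - by move=> v [/UL | ->].
  - by left.
  - by right.
by apply: incomparable; exists w; rewrite ?suffix_refl.
Qed.

Section SuffixCodeSums.
Variables (m : nat) (s : seq (seq A)).
Hypotheses (dendric : eventually_dendric X m) (s_uniq : uniq s).
Hypotheses (s_code : suffix_code (fun u => u \in s)) (sL : forall u, u \in s -> inL X u).

Let size_bound (w : seq A) : exists n, forall u, u \in s -> size u < size w + n.
Proof.
exists (\max_(v <- s) size v).+1 => u us.
by rewrite addnS ltnS (leq_trans (leq_bigmax_seq (F := size) u us isT)) ?leq_addl.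
Qed.

Lemma sum_rho_suffix_le w : m <= size w -> \sum_(u <- s | suffix w u) rho X u <= rho X w.
Proof.
have [n] := size_bound w; elim: n w => [|n IH] w bound mw.
  rewrite sum_suffix_none // => u /bound; rewrite addn0; apply: contraTN => /size_suffix.
  by rewrite leqNgt.
case: (inLbP X w) => [wL | wNL]; last by rewrite sum_suffix_notL.
case: (boolP (w \in s)) => ws; first by rewrite sum_suffix_mem.
rewrite sum_suffix_cons // (rho_sum_cons (dendric mw wL) wL).
apply: leq_sum => a _; apply: IH => [u /bound|]; rewrite /= ?addSnnS //; exact: leqW.
Qed.

Lemma sum_rho_suffix_maximal w :
  X_maximal_suffix_code X (fun u => u \in s) -> m <= size w -> inL X w ->
  (forall u, u \in s -> suffix u w -> u = w) ->
  \sum_(u <- s | suffix w u) rho X u = rho X w.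
Proof.
move=> s_max; have [n] := size_bound w; elim: n w => [|n IH] w bound mw wL below.
  have [u us] := maximal_suffix_code_comparable s_max wL.
  case/orP=> [/(below _ us) uw | wu]; last first.
    by have := bound u us; rewrite addn0 ltnNge size_suffix.
  by have := bound u us; rewrite uw addn0 ltnn.
case: (boolP (w \in s)) => ws; first by rewrite sum_suffix_mem.
rewrite sum_suffix_cons // (rho_sum_cons (dendric mw wL) wL).
apply: eq_bigr => a _; case: (inLbP X (a :: w)) => [awL | awNL]; last first.
  by rewrite sum_suffix_notL // rho_notL.
apply: IH => [u /bound||//|u us /suffix_cons_inv [//|uw]]; rewrite /= ?addSnnS //.
  exact: leqW.
by rewrite -(below u us uw) us in ws.
Qed.

End SuffixCodeSums.
End SuffixCodes.

Theorem mainTheorem11 (A : finType) (X : config A -> Prop) (m : nat) :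
  shift_space X -> eventually_dendric X m ->
  (forall U : seq A -> Prop, suffix_code U -> (forall u, U u -> inL X u) ->
     rho_finite X U) /\
  (forall s : seq (seq A), uniq s ->
     X_maximal_suffix_code X (fun u => u \in s) ->
     (forall u, u \in s -> m <= size u) ->
     \sum_(u <- s) rho X u = \sum_(w : m.-tuple A | inLb X w) rho X w).
Proof.
move=> _ dendric; split.
  move=> U U_code UL; exists (#|A| * #|A| ^ m + \sum_(t : m.-tuple A) rho X t).
  move=> s s_uniq sU; have s_code : suffix_code (fun u => u \in s).
    by move=> u v /sU Uu /sU Uv; apply: U_code.
  have sL u : u \in s -> inL X u by move/sU/UL.
  rewrite (bigID (fun u => m <= size u)) addnC leq_add ?sum_rho_short_le //.
  rewrite sum_long_words; apply: leq_sum => t _.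
  by apply: (sum_rho_suffix_le dendric s_uniq s_code sL); rewrite size_tuple.
move=> s s_uniq s_max s_long; have [s_code [sL _]] := s_max.
have -> : \sum_(u <- s) rho X u = \sum_(u <- s | m <= size u) rho X u.
  rewrite big_seq_cond [RHS]big_seq_cond; apply: eq_bigl => u.
  by case: (boolP (u \in s)) => // /s_long ->.
rewrite sum_long_words (bigID (fun t : m.-tuple A => inLb X t)) /=.
rewrite [X in _ + X]big1 ?addn0 => [|t /inLbP tNL]; last exact: sum_suffix_notL sL tNL.
apply: eq_bigr => t /inLbP tL.
apply: (sum_rho_suffix_maximal dendric s_uniq s_code sL s_max); rewrite ?size_tuple //.
move=> u us ut; have ut_size := size_suffix ut.
apply: suffix_size_inj ut (suffix_refl t) _.
by apply/eqP; rewrite eqn_leq ut_size size_tuple s_long.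
Qed.
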